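(* For every game $G$, the comma category $(\mathbf{FinGame}_{emb}/G)_{\mathbf{Games}_{emb}}$ has the joint embedding property and the amalgamation property.
   Context: A game tree is $T\subseteq M^{<\omega}$ (some set $M$) closed under initial segments such that every $t\in T$ has an extension $t^\frown x\in T$; $|t|$ is the length, $t\restriction k$ the initial segment of length $k$. $\mathrm{Run}(T)=\{R\in M^\omega:R\restriction n\in T\ \forall n\}$. A game is $(T,A)$ with $A\subseteq\mathrm{Run}(T)$; finite if $\mathrm{Run}(T)$ is finite. A chronological map $f\colon T_1\to T_2$ satisfies $|f(t)|=|t|$, $f(t\restriction k)=f(t)\restriction k$, inducing $\bar f$ on runs via $\bar f(R)\restriction n=f(R\restriction n)$. A game embedding $(T_1,A_1)\to(T_2,A_2)$ is an injective chronological $f$ with $\bar f(R)\in A_2\iff R\in A_1$ for all runs $R$. $\mathbf{Games}_{emb}$ is the category of games and game embeddings, $\mathbf{FinGame}_{emb}$ its full subcategory of finite games. The comma category $(\mathbf{FinGame}_{emb}/G)_{\mathbf{Games}_{emb}}$ has as objects the game embeddings $x\colon C\to G$ with $C$ finite, and as morphisms from $x_C\colon C\to G$ to $x_D\colon D\to G$ the game embeddings $h\colon C\to D$ with $x_D\circ h=x_C$. Joint embedding property: any two objects admit morphisms into a common object. Amalgamation property: for morphisms $a\colon P\to Q$, $a'\colon P\to Q'$ there are morphisms $b\colon Q\to R$, $b'\colon Q'\to R$ with $b\circ a=b'\circ a'$. *)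

From mathcomp Require Import all_boot.
Set Implicit Arguments. Unset Strict Implicit. Unset Printing Implicit Defensive.

Definition restr (M : Type) (R : nat -> M) (n : nat) : seq M := mkseq R n.

Definition isRun (M : Type) (T : seq M -> Prop) (R : nat -> M) : Prop :=
  forall n, T (restr R n).

Record game : Type := Game {
  gM : Type;
  gT : seq gM -> Prop;
  gA : (nat -> gM) -> Prop;
  gT_prefix : forall t k, gT t -> gT (take k t);
  gT_ext : forall t, gT t -> exists x, gT (rcons t x);
  gA_run : forall R, gA R -> isRun gT R
}.

(* Run(T) is finite (runs identified up to pointwise equality). *)
Definition finite_game (G : game) : Prop :=
  exists l : seq (nat -> gM G),
    forall R, isRun (@gT G) R -> exists2 i, i < size l & forall n, R n = nth R l i n.

(* f : T1 -> T2 is chronological (f given as a function on all sequences,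
   only its behaviour on T1 matters) *)
Definition chronological (G1 G2 : game) (f : seq (gM G1) -> seq (gM G2)) : Prop :=
  forall t, gT t ->
    [/\ gT (f t), size (f t) = size t & forall k, f (take k t) = take k (f t)].

(* game embedding: injective chronological map with
   fbar(R) in A2 <-> R in A1, where fbar(R) |` n = f (R |` n) *)
Definition game_embedding (G1 G2 : game) (f : seq (gM G1) -> seq (gM G2)) : Prop :=
  [/\ chronological f,
      (forall s t, gT s -> gT t -> f s = f t -> s = t)
    & forall (R : nat -> gM G1) (R' : nat -> gM G2), isRun (@gT G1) R ->
        (forall n, f (restr R n) = restr R' n) -> (gA R' <-> gA R)].

Record comma_obj (G : game) : Type := CommaObj {
  co_game : game;
  co_fin : finite_game co_game;
  co_map : seq (gM co_game) -> seq (gM G);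
  co_emb : game_embedding co_map
}.

Definition comma_mor (G : game) (X Y : comma_obj G)
  (h : seq (gM (co_game X)) -> seq (gM (co_game Y))) : Prop :=
  game_embedding h /\ forall t, @gT (co_game X) t -> @co_map G Y (h t) = @co_map G X t.

Arguments comma_mor {G} X Y h.

Definition joint_embedding_property (G : game) : Prop :=
  forall X Y : comma_obj G, exists (Z : comma_obj G) hX hY,
    comma_mor X Z hX /\ comma_mor Y Z hY.

Definition amalgamation_property (G : game) : Prop :=
  forall (P Q Q' : comma_obj G) a a', comma_mor P Q a -> comma_mor P Q' a' ->
    exists (R : comma_obj G) b b',
      [/\ comma_mor Q R b, comma_mor Q' R b'
        & forall t, @gT (co_game P) t -> b (a t) = b' (a' t)].

From mathcomp Require Import all_boot.
From Stdlib Require Import Classical ClassicalEpsilon FunctionalExtensionality.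
Set Implicit Arguments. Unset Strict Implicit.

(* Both properties are witnessed by one construction: given objects X and Y of
   the comma category over G, let U be the subgame of G whose tree is the union
   of the images of the trees of X and Y, with winning runs those of G that stay
   in this union.  Every run of U stays in one of the two images, so it lifts to
   a run of X or of Y; hence U is finite, and X, Y embed into U through their
   structure maps, compatibly with the inclusion U -> G.  Any two maps into X
   and Y over G agree after composing into U, which is amalgamation. *)

Lemma size_restr (M : Type) (R : nat -> M) n : size (restr R n) = n.
Proof. exact: size_mkseq. Qed.

Lemma take_restr (M : Type) (R : nat -> M) k n :
  k <= n -> take k (restr R n) = restr R k.
Proof. by move=> le_kn; rewrite /restr /mkseq -map_take take_iota (minn_idPl le_kn). Qed.

Lemma nth_restr (M : Type) (x0 : M) (R : nat -> M) n i :
  i < n -> nth x0 (restr R n) i = R i.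
Proof. exact: nth_mkseq. Qed.

Lemma restr_inj (M : Type) (R R' : nat -> M) :
  (forall n, restr R n = restr R' n) -> R = R'.
Proof.
move=> eqRR'; apply: functional_extensionality => n.
by rewrite -(nth_restr (R n) R (ltnSn n)) eqRR' nth_restr.
Qed.

Lemma prefix_closed_restr (M : Type) (P : seq M -> Prop) (R : nat -> M) k n :
  (forall t k, P t -> P (take k t)) -> k <= n -> P (restr R n) -> P (restr R k).
Proof. by move=> P_prefix le_kn /(P_prefix _ k); rewrite take_restr. Qed.

Lemma isRun_or (M : Type) (P Q : seq M -> Prop) (R : nat -> M) :
  (forall t k, P t -> P (take k t)) -> (forall t k, Q t -> Q (take k t)) ->
  isRun (fun t => P t \/ Q t) R -> isRun P R \/ isRun Q R.
Proof.
move=> P_prefix Q_prefix RPQ; case: (classic (isRun P R)) => [|notRP]; first by left.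
right; have [n0 Pn0F] := not_all_ex_not _ _ notRP => n.
case: (RPQ (n + n0)) => [Pnn0 | Qnn0].
  by case: Pn0F; apply: prefix_closed_restr Pnn0; rewrite // leq_addl.
by apply: prefix_closed_restr Qnn0; rewrite // leq_addr.
Qed.

Definition finitely_many_runs (M : Type) (P : (nat -> M) -> Prop) : Prop :=
  exists l : seq (nat -> M),
    forall R, P R -> exists2 i, i < size l & forall n, R n = nth R l i n.

Lemma finitely_many_runs_sub (M : Type) (P Q : (nat -> M) -> Prop) :
  (forall R, P R -> Q R) -> finitely_many_runs Q -> finitely_many_runs P.
Proof. by move=> subPQ [l Hl]; exists l => R /subPQ /Hl. Qed.

Lemma finitely_many_runsU (M : Type) (P Q : (nat -> M) -> Prop) :
  finitely_many_runs P -> finitely_many_runs Q ->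
  finitely_many_runs (fun R => P R \/ Q R).
Proof.
move=> [lP HP] [lQ HQ]; exists (lP ++ lQ) => R [/HP [i lt_i eqR] | /HQ [i lt_i eqR]].
  by exists i => [|n]; rewrite ?size_cat ?ltn_addr // nth_cat lt_i.
exists (size lP + i) => [|n]; first by rewrite size_cat ltn_add2l.
by rewrite nth_cat ltnNge leq_addr addKn.
Qed.

Section Subgame.

Variables (G : game) (S : seq (gM G) -> Prop).
Hypotheses (S_sub : forall t, S t -> gT t)
           (S_prefix : forall t k, S t -> S (take k t))
           (S_ext : forall t, S t -> exists x, S (rcons t x)).

Definition subgame_win (R : nat -> gM G) : Prop := gA R /\ isRun S R.

Lemma subgame_win_run R : subgame_win R -> isRun S R.
Proof. by case. Qed.

Definition subgame : game := Game S_prefix S_ext subgame_win_run.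

Lemma subgame_inclusion : game_embedding (G1 := subgame) (G2 := G) id.
Proof.
split=> // [t St | R R' RS eqRR']; first by split=> //; exact: S_sub.
rewrite -(restr_inj eqRR'); split; [by split | by case].
Qed.

Lemma embedding_into_subgame (H : game) (f : seq (gM H) -> seq (gM G)) :
  game_embedding f -> (forall t, gT t -> S (f t)) ->
  game_embedding (G1 := H) (G2 := subgame) f.
Proof.
move=> [f_chron f_inj f_win] f_S; split=> // [t Ht | R R' RH eqRR'].
  by have [_ ? ?] := f_chron t Ht; split; first exact: f_S.
rewrite -(f_win R R' RH eqRR'); split; first by case.
by split=> // n; rewrite -eqRR'; apply: f_S.
Qed.

End Subgame.

Section EmbeddingImage.

Variables (G1 G2 : game) (f : seq (gM G1) -> seq (gM G2)).
Hypothesis f_emb : game_embedding f.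

Definition emb_image (t : seq (gM G2)) : Prop := exists2 s, gT s & f s = t.

Lemma emb_image_tree t : emb_image t -> gT t.
Proof. by case: f_emb => f_chron _ _ [s /f_chron[]] ? _ _ <-. Qed.

Lemma emb_image_prefix t k : emb_image t -> emb_image (take k t).
Proof.
case: f_emb => f_chron _ _ [s Ts <-]; exists (take k s); first exact: gT_prefix.
by have [_ _ ->] := f_chron s Ts.
Qed.

Lemma emb_image_rcons s x : gT (rcons s x) -> exists z, f (rcons s x) = rcons (f s) z.
Proof.
case: f_emb => f_chron _ _ Tsx; have [_ size_fsx take_fsx] := f_chron _ Tsx.
have f_s : take (size s) (f (rcons s x)) = f s by rewrite -take_fsx -cats1 take_size_cat.
move: size_fsx f_s; case/lastP: (f (rcons s x)) => [|u z]; first by rewrite size_rcons.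
rewrite !size_rcons => /eqP; rewrite eqSS => /eqP <- <-.
by exists z; rewrite -!cats1 take_size_cat.
Qed.

Lemma emb_image_ext t : emb_image t -> exists z, emb_image (rcons t z).
Proof.
move=> [s Ts <-]; have [x Tsx] := gT_ext Ts.
by have [z fsx] := emb_image_rcons Tsx; exists z, (rcons s x).
Qed.

Lemma emb_image_run_lift (R : nat -> gM G2) :
  isRun emb_image R ->
  exists2 Q, isRun (@gT G1) Q & forall n, f (restr Q n) = restr R n.
Proof.
case: f_emb => f_chron f_inj _ RI.
have {}RI n : exists s, gT s /\ f s = restr R n by case: (RI n) => s; exists s.
pose pre n := proj1_sig (constructive_indefinite_description _ (RI n)).
have pre_spec n : gT (pre n) /\ f (pre n) = restr R n.
  exact: proj2_sig (constructive_indefinite_description _ (RI n)).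
have size_pre n : size (pre n) = n.
  by have [Tn fn] := pre_spec n; have [_ <- _] := f_chron _ Tn; rewrite fn size_restr.
have take_pre k n : k <= n -> take k (pre n) = pre k.
  move=> le_kn; have [Tn fn] := pre_spec n; have [Tk fk] := pre_spec k.
  apply: f_inj => //; first exact: gT_prefix.
  by have [_ _ ->] := f_chron _ Tn; rewrite fn fk take_restr.
case E1: (pre 1) (size_pre 1) => [|x0 [|? ?]] // _.
pose Q n := nth x0 (pre n.+1) n.
have restr_Q n : restr Q n = pre n.
  apply: (eq_from_nth (x0 := x0)) => [|i]; rewrite size_restr ?size_pre // => lt_in.
  by rewrite nth_restr // /Q -(take_pre i.+1 n lt_in) nth_take.
by exists Q => n; rewrite restr_Q; case: (pre_spec n).
Qed.

Lemma finitely_many_image_runs :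
  finite_game G1 -> finitely_many_runs (isRun emb_image).
Proof.
move=> [l Hl]; case: (classic (inhabited (gM G2))) => [[x0] | noM]; last first.
  by exists nil => R; case: noM; constructor; exact: R 0.
pose push (Q : nat -> gM G1) n := nth x0 (f (restr Q n.+1)) n.
exists (map push l) => R /emb_image_run_lift [Q TQ fQ].
have [i lt_i eqQ] := Hl Q TQ; exists i => [|n]; first by rewrite size_map.
rewrite (nth_map Q) // /push.
have -> : restr (nth Q l i) n.+1 = restr Q n.+1 by apply: eq_mkseq => k; rewrite eqQ.
by rewrite fQ nth_restr.
Qed.

End EmbeddingImage.

Section Amalgam.

Variables (G : game) (X Y : comma_obj G).

Definition image_union (t : seq (gM G)) : Prop :=
  emb_image (@co_map _ X) t \/ emb_image (@co_map _ Y) t.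

Lemma image_union_tree t : image_union t -> gT t.
Proof. by case; apply: emb_image_tree; apply: co_emb. Qed.

Lemma image_union_prefix t k : image_union t -> image_union (take k t).
Proof. by case=> It; [left | right]; apply: emb_image_prefix It; apply: co_emb. Qed.

Lemma image_union_ext t : image_union t -> exists z, image_union (rcons t z).
Proof.
by case=> /emb_image_ext[|z ?]; try apply: co_emb; exists z; [left | right].
Qed.

Definition amalgam_game : game := subgame image_union_prefix image_union_ext.

Lemma amalgam_game_finite : finite_game amalgam_game.
Proof.
have finX := finitely_many_image_runs (co_emb X) (co_fin X).
have finY := finitely_many_image_runs (co_emb Y) (co_fin Y).
apply: finitely_many_runs_sub (finitely_many_runsU finX finY) => R.
by apply: isRun_or => t k; apply: emb_image_prefix; apply: co_emb.
Qed.

Definition amalgam : comma_obj G :=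
  CommaObj amalgam_game_finite (subgame_inclusion image_union_tree _ _).

Lemma amalgam_mor_l : comma_mor X amalgam (@co_map _ X).
Proof.
split=> //; apply: embedding_into_subgame; first exact: co_emb.
by move=> t Tt; left; exists t.
Qed.

Lemma amalgam_mor_r : comma_mor Y amalgam (@co_map _ Y).
Proof.
split=> //; apply: embedding_into_subgame; first exact: co_emb.
by move=> t Tt; right; exists t.
Qed.

End Amalgam.

Theorem mainTheorem14 (G : game) :
  joint_embedding_property G /\ amalgamation_property G.
Proof.
split=> [X Y | P Q Q' a a' [_ a_over] [_ a'_over]].
  by exists (amalgam X Y), (@co_map _ X), (@co_map _ Y); split;
    [exact: amalgam_mor_l | exact: amalgam_mor_r].
exists (amalgam Q Q'), (@co_map _ Q), (@co_map _ Q'); split;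
  [exact: amalgam_mor_l | exact: amalgam_mor_r |].
by move=> t Tt; rewrite a_over // a'_over.
Qed.
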